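(* For every positive integer $r$ and every graph $G$, if $\widetilde G$ is the graph obtained from $G$ by subdividing every edge $r$ times, then $\mathrm{cop}(\widetilde G)\le \mathrm{cop}(G)+1$.
   Context: All graphs are finite, undirected, without loops or multiple edges. Subdividing an edge $uv$ $r$ times means replacing it by a path from $u$ to $v$ with $r$ new internal vertices. Cops and Robber game on a connected graph: for an integer $k\ge 1$, the cop player places $k$ cops on (not necessarily distinct) vertices, then the robber is placed on a vertex; then, starting with the cops, the players alternate moves. In a cop move, each cop either stays or moves to an adjacent vertex; in a robber move, the robber stays or moves to an adjacent vertex. The cops win if at some point a cop and the robber occupy the same vertex. Both players have complete information. The cop number $\mathrm{cop}(G)$ of a connected graph $G$ is the smallest $k$ such that the cops have a winning strategy with $k$ cops; for a non-connected graph it is the maximum cop number of its connected components. *)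

(* Finite simple graphs are symmetric irreflexive relations
   on a finType. *)
From mathcomp Require Import all_boot.
From Stdlib Require Import ClassicalEpsilon.

Set Implicit Arguments.
Unset Strict Implicit.
Unset Printing Implicit Defensive.

Definition cop_move (V : finType) (adj : rel V) (k : nat)
  (c c' : 'I_k -> V) : Prop :=
  forall i, c' i = c i \/ adj (c i) (c' i).

Definition captured (V : finType) (k : nat) (c : 'I_k -> V) (x : V) : Prop :=
  exists i, c i = x.

(* cops_win_from adj c x : it is the cops' turn, cops at c, robber at x,
   and the cops have a strategy guaranteeing capture (inductive winning
   region / attractor of the game). *)
Inductive cops_win_from (V : finType) (adj : rel V) (k : nat)
  : ('I_k -> V) -> V -> Prop :=
| cw_caught c x : captured c x -> cops_win_from adj c x
| cw_move c x c' : cop_move adj c c' ->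
    (captured c' x \/
     forall x', (x' = x \/ adj x x') -> cops_win_from adj c' x') ->
    cops_win_from adj c x.

Definition cops_win_on_comp (V : finType) (adj : rel V) (k : nat) (x0 : V)
  : Prop :=
  exists c0 : 'I_k -> V, (forall i, connect adj x0 (c0 i)) /\
    forall x, connect adj x0 x -> cops_win_from adj c0 x.

Definition bool_of (P : Prop) : bool :=
  if excluded_middle_informative P then true else false.

Definition comp_cop_number (V : finType) (adj : rel V) (x0 : V) : nat :=
  let P := fun k => bool_of (0 < k /\ cops_win_on_comp adj k x0) in
  match excluded_middle_informative (exists k, P k) with
  | left h => ex_minn h
  | right _ => 0
  end.

Definition cop_number (V : finType) (adj : rel V) : nat :=
  \max_(x : V) comp_cop_number adj x.

(* each edge {u,v} represented once, oriented by enum_rank u < enum_rank v *)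
Definition sedge (T : finType) (e : rel T) :=
  {p : T * T | e p.1 p.2 && (enum_rank p.1 < enum_rank p.2)}.

(* vertices: original ones, plus r internal vertices (p, i), i < r, per edge;
   on edge p = (u,v), the path is u - (p,0) - (p,1) - ... - (p,r-1) - v *)
Definition svert (T : finType) (e : rel T) (r : nat) : finType :=
  (T + (sedge e * 'I_r))%type.

Definition sadj (T : finType) (e : rel T) (r : nat) : rel (svert e r) :=
  fun a b =>
    match a, b with
    | inl _, inl _ => false
    | inl x, inr (p, i) =>
        ((x == (val p).1) && (val i == 0)) || ((x == (val p).2) && (val i == r.-1))
    | inr (p, i), inl x =>
        ((x == (val p).1) && (val i == 0)) || ((x == (val p).2) && (val i == r.-1))
    | inr (p, i), inr (q, j) =>
        (p == q) && (((val i).+1 == val j) || ((val j).+1 == val i))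
    end.

Arguments sadj {T} e r.
Arguments svert {T} e r.
Arguments sedge {T} e.

From mathcomp Require Import all_boot zify.
From Stdlib Require Import FunctionalExtensionality ClassicalEpsilon.

(* Once the robber leaves a vertex of the subdivided graph he must walk the
   whole subdivided edge before he can turn around, so a robber who stays put
   or steps back can be caught by one extra cop following his trail.  It thus
   suffices that cop(G) cops catch a robber who must move every turn and never
   return to the vertex he has just left.  Against such a robber the cops play
   a winning strategy of G: while the robber walks along a subdivided edge xx',
   each cop walks along its own subdivided edge cc' chosen by the strategy, and
   all arrive at the same time; before the first round the cops wait at their
   starting vertices, which costs nothing since the robber is forced to move,
   and from any other position they first walk back to those vertices. *)

Set Implicit Arguments.
Unset Strict Implicit.
Unset Printing Implicit Defensive.

(* The generated induction principle gives no hypothesis under the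
   disjunction of [cw_move]. *)
Definition cops_win_from_strong_ind (V : finType) (adj : rel V) (k : nat)
  (P : ('I_k -> V) -> V -> Prop)
  (Pcaught : forall c x, captured c x -> P c x)
  (Pmove : forall c x c', cop_move adj c c' ->
     (captured c' x \/ forall x', x' = x \/ adj x x' -> P c' x') -> P c x) :
  forall c x, cops_win_from adj c x -> P c x :=
  fix F c x h {struct h} :=
  match h with
  | cw_caught c x hc => Pcaught c x hc
  | cw_move c x c' hm hor => Pmove c x c' hm
     (match hor with
      | or_introl h1 => or_introl h1
      | or_intror h2 => or_intror (fun x' hx' => F c' x' (h2 x' hx'))
      end)
  end.

Lemma cop_move_stay (V : finType) (adj : rel V) k (q : 'I_k -> V) :
  cop_move adj q q.
Proof. by move=> i; left. Qed.

Section NonBacktrackingGame.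
Variables (V : finType) (adj : rel V) (k : nat).

(* [nb_cops_win q z p]: cops at [q] to move, robber at [z]; the robber must
   move every turn and may not return to the vertex [p] he has just left. *)
Inductive nb_cops_win : ('I_k -> V) -> V -> V -> Prop :=
| nb_capture q q' z p : cop_move adj q q' -> captured q' z -> nb_cops_win q z p
| nb_move q q' z p : cop_move adj q q' ->
    (forall z', adj z z' -> z' <> p -> nb_cops_win q' z' z) -> nb_cops_win q z p.

Lemma nb_forced_walk (w : nat -> V) (qs : nat -> 'I_k -> V) N :
  (forall j, 0 < j < N -> forall z, adj (w j) z -> z <> w j.-1 -> z = w j.+1) ->
  (forall j, 0 < j < N -> cop_move adj (qs j) (qs j.+1)) ->
  nb_cops_win (qs N) (w N) (w N.-1) ->
  forall j, 0 < j <= N -> nb_cops_win (qs j) (w j) (w j.-1).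
Proof.
move=> hw hq hN j /andP[hj0 hjN].
move: {2}(N - j) (erefl (N - j)) => m.
elim: m j hj0 hjN => [|m IH] j hj0 hjN hm; first by have -> : j = N by lia.
have hjN' : 0 < j < N by lia.
apply: (nb_move (hq j hjN')) => z hz hne.
rewrite (hw j hjN' z hz hne); apply: IH; lia.
Qed.

Definition add_cop (q : 'I_k -> V) (f : V) : 'I_k.+1 -> V :=
  fun i => if unlift ord_max i is Some j then q j else f.

Lemma add_cop_max q f : add_cop q f ord_max = f.
Proof. by rewrite /add_cop unlift_none. Qed.

Lemma add_cop_lift q f j : add_cop q f (lift ord_max j) = q j.
Proof. by rewrite /add_cop liftK. Qed.

Lemma forall_add_cop (P : pred V) q f :
  (forall j, P (q j)) -> P f -> forall i, P (add_cop q f i).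
Proof. by move=> hq hf i; rewrite /add_cop; case: unliftP. Qed.

Lemma add_cop_move q q' f f' : cop_move adj q q' -> f' = f \/ adj f f' ->
  cop_move adj (add_cop q f) (add_cop q' f').
Proof. by move=> hq hf i; rewrite /add_cop; case: unliftP => [j _|_]. Qed.

Section ClosedRegion.
Variable C : pred V.
Hypothesis C_closed : forall u v, C u -> adj u v -> C v.

Lemma path_closed f s : C f -> path adj f s -> C (last f s).
Proof. by elim: s f => [|y s IH] f //= hf /andP[hfy]; apply/IH/(C_closed hf). Qed.

Lemma cop_move_closed (q q' : 'I_k -> V) :
  cop_move adj q q' -> (forall i, C (q i)) -> forall i, C (q' i).
Proof. by move=> hm hq i; case: (hm i) => [->|]; last apply: C_closed. Qed.

Lemma nb_cops_win_travel q0 :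
  (forall z p, C z -> adj p z -> nb_cops_win q0 z p) ->
  forall n q (s : 'I_k -> seq V),
  (forall i, [/\ path adj (q i) (s i), last (q i) (s i) = q0 i & size (s i) <= n]) ->
  forall z p, C z -> adj p z -> nb_cops_win q z p.
Proof.
move=> hq0; elim=> [|n IH] q s hs z p hz hpz.
  have -> : q = q0.
    by apply: functional_extensionality => i; case: (hs i); case: (s i).
  exact: hq0.
apply: (nb_move (q' := fun i => head (q i) (s i))).
  by move=> i; case: (hs i); case: (s i) => [|y t] /=; [left|case/andP; right].
move=> z' hzz' _; apply: (IH _ (fun i => behead (s i)) _ z' z (C_closed hz hzz') hzz').
by move=> i; case: (hs i); case: (s i) => [|y t] //= /andP[].
Qed.

Lemma nb_cops_win_connect q0 q :
  (forall z p, C z -> adj p z -> nb_cops_win q0 z p) ->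
  (forall i, connect adj (q i) (q0 i)) ->
  forall z p, C z -> adj p z -> nb_cops_win q z p.
Proof.
move=> hq0 hq.
have /fin_all_exists[s hs] :
    forall i, exists s, path adj (q i) s /\ last (q i) s = q0 i.
  by move=> i; case/connectP: (hq i) => s; exists s.
apply: (nb_cops_win_travel hq0 (n := \max_i size (s i)) (s := s)) => i.
by case: (hs i) => h1 h2; split=> //; apply: leq_bigmax.
Qed.

(* The extra cop walks along the robber's trail from [f]; a robber who
   stays put or turns back shortens that trail. *)
Lemma follower_chase n :
  (forall s, size s <= n -> forall q f, (forall i, C (q i)) -> C f ->
     path adj f s -> cops_win_from adj (add_cop q f) (last f s)) ->
  forall q z p, nb_cops_win q z p ->
  forall f s, size s <= n -> last f s = p -> path adj f (rcons s z) ->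
  (forall i, C (q i)) -> C f -> cops_win_from adj (add_cop q f) z.
Proof.
move=> IH q z p; elim=> {q z p} [q q' z p hm [i hi]|q q' z p hm _ IHnb]
  f s hs hp hpath hq hf.
  apply: (cw_move (add_cop_move hm (or_introl erefl))); left.
  by exists (lift ord_max i); rewrite add_cop_lift.
case: s hs hp hpath => [|y s] /= hs hp /andP[hfy hpath].
  apply: (cw_move (add_cop_move hm (or_intror hfy))); left.
  by exists ord_max; rewrite add_cop_max.
apply: (cw_move (add_cop_move hm (or_intror hfy))); right=> x hx.
have hq' := cop_move_closed hm hq; have hy := C_closed hf hfy.
have [->|hxz] := eqVneq x z.
  have := IH (rcons s z) _ q' y hq' hy hpath.
  by rewrite size_rcons last_rcons; apply.
have hzx : adj z x by case: hx => // hxz'; rewrite hxz' eqxx in hxz.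
have [hxp|hxp] := eqVneq x p.
  move: hpath; rewrite rcons_path => /andP[hpath _].
  by rewrite hxp -hp; apply: IH => //; apply: ltnW.
apply: (IHnb x hzx (elimN eqP hxp) y (rcons s z)) => //.
- by rewrite size_rcons.
- by rewrite last_rcons.
- by rewrite rcons_path hpath last_rcons.
Qed.

Lemma follower_wins q f :
  (forall q, (forall i, C (q i)) -> forall z p, C z -> adj p z -> nb_cops_win q z p) ->
  (forall i, C (q i)) -> C f ->
  forall x, connect adj f x -> cops_win_from adj (add_cop q f) x.
Proof.
move=> hnb hq hf x /connectP[s hpath ->] {x}.
elim: {s}(size s) {-2}s (leqnn (size s)) q f hq hf hpath => [|n IH] s hs q f hq hf.
  by case: s hs => // _ _; apply: cw_caught; exists ord_max; rewrite add_cop_max.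
case/lastP: s hs => [|s z] hs hpath.
  by apply: cw_caught; exists ord_max; rewrite add_cop_max.
rewrite last_rcons; move: hs hpath; rewrite size_rcons ltnS => hs hpath.
have hz : C z by have := path_closed hf hpath; rewrite last_rcons.
have hpz : adj (last f s) z by move: hpath; rewrite rcons_path => /andP[].
exact: (follower_chase IH (hnb q hq z _ hz hpz) hs erefl hpath hq hf).
Qed.

End ClosedRegion.
End NonBacktrackingGame.

Section Subdivision.
Variables (T : finType) (e : rel T) (r : nat).
Hypotheses (e_sym : symmetric e) (e_irr : irreflexive e).
Local Notation V := (svert e r.+1).
Local Notation A := (sadj e r.+1).

Lemma sadj_sym : symmetric A.
Proof. by case=> [x|[p i]] [y|[q j]] //=; rewrite eq_sym orbC. Qed.

(* The vertices of the path replacing the edge [p], numbered from [0] at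
   [(val p).1] to [r.+2] at [(val p).2]. *)
Definition edge_vertex (p : sedge e) (d : nat) : V :=
  if d == 0 then inl (val p).1 else if r.+2 <= d then inl (val p).2
  else inr (p, inord d.-1).

Lemma edge_vertex_last p : edge_vertex p r.+2 = inl (val p).2.
Proof. by rewrite /edge_vertex leqnn. Qed.

Lemma inr_edge_vertex (p : sedge e) (i : 'I_r.+1) : inr (p, i) = edge_vertex p i.+1.
Proof.
rewrite /edge_vertex /= ifF; last by have := ltn_ord i; lia.
by congr inr; congr pair; apply: val_inj; rewrite /= inordK.
Qed.

Lemma edge_vertex_step p d : d < r.+2 -> A (edge_vertex p d) (edge_vertex p d.+1).
Proof.
rewrite /edge_vertex /=; case: d => [|d] hd /=; first by rewrite eqxx inordK.
case: ifP => h1; first lia.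
case: ifP => h2; last by rewrite /= eqxx /= !inordK ?eqxx //; lia.
have -> : d = r by lia.
by rewrite /= inordK // !eqxx orbT.
Qed.

Lemma edge_vertex_adj p d w : d < r.+1 -> A (edge_vertex p d.+1) w ->
  w = edge_vertex p d \/ w = edge_vertex p d.+2.
Proof.
move=> hd; rewrite {1}/edge_vertex /= ifF; last lia.
case: w => [x|[q j]] /=.
  rewrite inordK; last lia.
  case/orP=> /andP[/eqP -> /eqP hj]; first by left; rewrite hj.
  by right; rewrite hj /edge_vertex /= leqnn.
rewrite inordK; last lia.
have hjr := ltn_ord j.
case/andP=> /eqP <- /orP[] /eqP hj.
  right; rewrite /edge_vertex /= ifF; last lia.
  by congr inr; congr pair; apply: val_inj; rewrite /= inordK; lia.
left; rewrite /edge_vertex /=; case: d hd hj => [|d] hd hj //=.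
rewrite ifF; last lia.
by congr inr; congr pair; apply: val_inj; rewrite /= inordK; lia.
Qed.

(* The vertices met when walking from [u] to [v] along the subdivided edge
   [uv]; the walk stays at [u] when [uv] is not an edge. *)
Definition subdiv_walk (u v : T) (t : nat) : V :=
  match (insub (u, v) : option (sedge e)) with
  | Some p => edge_vertex p t
  | None => if (insub (v, u) : option (sedge e)) is Some p
            then edge_vertex p (r.+2 - t) else inl u
  end.

Lemma sedge_edge (p : sedge e) : e (val p).1 (val p).2.
Proof. by case/andP: (valP p). Qed.

Lemma subdiv_walk_sedge (p : sedge e) t :
  subdiv_walk (val p).1 (val p).2 t = edge_vertex p t.
Proof. by rewrite /subdiv_walk -surjective_pairing valK. Qed.

Lemma subdiv_walk_sedge_rev (p : sedge e) t :
  subdiv_walk (val p).2 (val p).1 t = edge_vertex p (r.+2 - t).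
Proof.
rewrite /subdiv_walk insubF; last first.
  by case/andP: (valP p) => _ h; apply/negbTE; rewrite negb_and /= -leqNgt ltnW ?orbT.
by rewrite -surjective_pairing valK.
Qed.

Lemma subdiv_walk_nonedge u v t : ~~ e u v -> subdiv_walk u v t = inl u.
Proof.
move=> h; rewrite /subdiv_walk insubF; last by apply/negbTE; rewrite negb_and h.
by rewrite insubF //; apply/negbTE; rewrite negb_and e_sym h.
Qed.

Lemma sedge_of_edge u v : e u v -> exists p : sedge e,
  ((val p).1 = u /\ (val p).2 = v) \/ ((val p).1 = v /\ (val p).2 = u).
Proof.
move=> huv; case: (ltngtP (enum_rank u : nat) (enum_rank v)) => h.
- have hp : e (u, v).1 (u, v).2 && (enum_rank (u, v).1 < enum_rank (u, v).2).
    by rewrite /= huv h.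
  by exists (exist _ (u, v) hp); left.
- have hp : e (v, u).1 (v, u).2 && (enum_rank (v, u).1 < enum_rank (v, u).2).
    by rewrite /= e_sym huv h.
  by exists (exist _ (v, u) hp); right.
- have /enum_rank_inj huv' : enum_rank u = enum_rank v by apply: val_inj.
  by move: huv; rewrite huv' e_irr.
Qed.

Lemma subdiv_walk0 u v : subdiv_walk u v 0 = inl u.
Proof.
have [h|h] := boolP (e u v); last by rewrite subdiv_walk_nonedge.
case: (sedge_of_edge h) => p [[<- <-]|[<- <-]].
  by rewrite subdiv_walk_sedge.
by rewrite subdiv_walk_sedge_rev subn0 edge_vertex_last.
Qed.

Lemma subdiv_walk_last u v : v = u \/ e u v -> subdiv_walk u v r.+2 = inl v.
Proof.
case=> [->|h]; first by rewrite subdiv_walk_nonedge ?e_irr.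
case: (sedge_of_edge h) => p [[<- <-]|[<- <-]].
  by rewrite subdiv_walk_sedge edge_vertex_last.
by rewrite subdiv_walk_sedge_rev subnn.
Qed.

Lemma subdiv_walk_step u v t : e u v -> t < r.+2 ->
  A (subdiv_walk u v t) (subdiv_walk u v t.+1).
Proof.
move=> h ht; case: (sedge_of_edge h) => p [[<- <-]|[<- <-]].
  by rewrite !subdiv_walk_sedge edge_vertex_step.
rewrite !subdiv_walk_sedge_rev sadj_sym.
have -> : r.+2 - t = (r.+1 - t).+1 by lia.
have -> : r.+2 - t.+1 = r.+1 - t by lia.
apply: edge_vertex_step; lia.
Qed.

Lemma cop_move_subdiv_walk k (c c' : 'I_k -> T) t : cop_move e c c' -> t < r.+2 ->
  cop_move A (fun i => subdiv_walk (c i) (c' i) t)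
             (fun i => subdiv_walk (c i) (c' i) t.+1).
Proof.
move=> hm ht i; case: (hm i) => [->|h]; last by right; apply: subdiv_walk_step.
by left; rewrite !subdiv_walk_nonedge ?e_irr.
Qed.

Lemma subdiv_walk_forced u v : e u v ->
  forall j, 0 < j < r.+2 -> forall w, A (subdiv_walk u v j) w ->
  w <> subdiv_walk u v j.-1 -> w = subdiv_walk u v j.+1.
Proof.
move=> h [//|s] /= hs w; case: (sedge_of_edge h) => p [[<- <-]|[<- <-]].
  rewrite !subdiv_walk_sedge => /edge_vertex_adj[]; by [lia|move->|].
rewrite !subdiv_walk_sedge_rev.
have -> : r.+2 - s.+1 = (r - s).+1 by lia.
have -> : r.+2 - s = (r - s).+2 by lia.
have -> : r.+2 - s.+2 = r - s by lia.
by move=> /edge_vertex_adj[]; [lia|move->|].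
Qed.

Lemma sadj_inl u w : A (inl u) w -> exists v, e u v /\ w = subdiv_walk u v 1.
Proof.
case: w => [//|[p i]] /= /orP[] /andP[/eqP -> /eqP hi];
  rewrite inr_edge_vertex hi.
  by exists (val p).2; rewrite subdiv_walk_sedge sedge_edge.
exists (val p).1; rewrite subdiv_walk_sedge_rev e_sym sedge_edge subSS subn0.
by [].
Qed.

Lemma sadj_inr w (p : sedge e) (i : 'I_r.+1) : A w (inr (p, i)) ->
  exists u v j, [/\ e u v, j < r.+1,
    inr (p, i) = subdiv_walk u v j.+1 & w = subdiv_walk u v j].
Proof.
rewrite sadj_sym inr_edge_vertex => /edge_vertex_adj[]; first exact: ltn_ord.
  move=> ->; exists (val p).1, (val p).2, i.
  by rewrite !subdiv_walk_sedge sedge_edge.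
have hi := ltn_ord i.
move=> ->; exists (val p).2, (val p).1, (r - i).
rewrite !subdiv_walk_sedge_rev e_sym sedge_edge.
by split=> //; [lia|congr edge_vertex; lia|congr edge_vertex; lia].
Qed.

Lemma connect_subdiv_walk u v t : e u v -> t <= r.+2 ->
  connect A (inl u) (subdiv_walk u v t).
Proof.
move=> h; elim: t => [|t IH] ht; first by rewrite subdiv_walk0.
exact: connect_trans (IH (ltnW ht)) (connect1 (subdiv_walk_step h ht)).
Qed.

Lemma connect_subdiv_inl u v : connect e u v -> connect A (inl u) (inl v).
Proof.
move=> /connectP[s hs ->]; elim: s u hs => [|y s IH] u /=; first by rewrite connect0.
move=> /andP[h hs]; apply: (connect_trans _ (IH y hs)).
by rewrite -(subdiv_walk_last (or_intror h)); apply: connect_subdiv_walk.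
Qed.

Definition subdiv_base (z : V) : T :=
  match z with inl x => x | inr (p, _) => (val p).1 end.

Lemma connect_subdiv_base z : connect A (inl (subdiv_base z)) z.
Proof.
case: z => [x|[p i]]; first exact: connect0.
rewrite /= inr_edge_vertex -subdiv_walk_sedge.
by apply: connect_subdiv_walk (sedge_edge p) _; rewrite ltnW // ltnS.
Qed.

Lemma connect_subdiv_base_sadj z w : A z w -> connect e (subdiv_base z) (subdiv_base w).
Proof.
case: z => [x|[p i]]; case: w => [y|[q j]] //=.
- case/orP=> /andP[/eqP -> _]; first exact: connect0.
  by apply: connect1; rewrite e_sym sedge_edge.
- case/orP=> /andP[/eqP -> _]; first exact: connect0.
  exact/connect1/sedge_edge.
- by case/andP=> /eqP -> _; apply: connect0.
Qed.

Lemma connect_subdiv_base_connect z w :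
  connect A z w -> connect e (subdiv_base z) (subdiv_base w).
Proof.
move=> /connectP[s hs ->]; elim: s z hs => [|y s IH] z /=; first by rewrite connect0.
move=> /andP[h hs]; exact: connect_trans (connect_subdiv_base_sadj h) (IH y hs).
Qed.

(* The cops copy a winning strategy of the original graph: while the robber
   walks along the subdivided edge [x x'], every cop walks along its own
   subdivided edge [c i, c' i], and they all arrive together. *)
Lemma subdiv_simulation k (c : 'I_k -> T) x' : cops_win_from e c x' ->
  forall x, e x x' -> nb_cops_win A (fun i => inl (c i)) (subdiv_walk x x' 1) (inl x).
Proof.
move: c x'; apply: cops_win_from_strong_ind => [c x' [i hi]|c x' c' hm hwin] x hx.
  rewrite -(subdiv_walk0 x x').
  apply: (nb_forced_walk (subdiv_walk_forced hx) (qs := fun _ i => inl (c i))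
    (fun _ _ => cop_move_stay _ _)); last by [].
  rewrite subdiv_walk_last; last by right.
  by apply: nb_capture (cop_move_stay _ _) _; exists i; rewrite hi.
have cops_end : (fun i => subdiv_walk (c i) (c' i) r.+2) = (fun i => inl (c' i)).
  by apply: functional_extensionality => i; rewrite subdiv_walk_last.
have cops_start : (fun i => subdiv_walk (c i) (c' i) 0) = (fun i => inl (c i)).
  by apply: functional_extensionality => i; rewrite subdiv_walk0.
rewrite -cops_start -(subdiv_walk0 x x').
refine (nb_forced_walk (subdiv_walk_forced hx)
  (qs := fun j i => subdiv_walk (c i) (c' i) j.-1) _ _ (j := 1) isT).
  by move=> [//|j] /= hj; apply: cop_move_subdiv_walk hm _; lia.
rewrite /= subdiv_walk_last; last by right.
have hmv := cop_move_subdiv_walk hm (ltnSn r.+1); rewrite cops_end in hmv.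
case: hwin => [[i hi]|hwin]; first by apply: nb_capture hmv _; exists i; rewrite hi.
apply: (nb_move hmv) => z hz _.
case: (sadj_inl hz) => x'' [hx'' ->].
exact: hwin x'' (or_intror hx'') x' hx''.
Qed.

Lemma subdiv_home_win k (c0 : 'I_k -> T) x0 :
  (forall x, connect e x0 x -> cops_win_from e c0 x) ->
  forall z p, connect e x0 (subdiv_base z) -> A p z ->
  nb_cops_win A (fun i => inl (c0 i)) z p.
Proof.
move=> hwin.
have at_vertex x p : connect e x0 x -> nb_cops_win A (fun i => inl (c0 i)) (inl x) p.
  move=> hx; apply: (nb_move (cop_move_stay _ _)) => z hz _.
  case: (sadj_inl hz) => x' [hxx' ->].
  exact: subdiv_simulation (hwin x' (connect_trans hx (connect1 hxx'))) x hxx'.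
case=> [x|[p0 i]] p hx; first by move=> _; apply: at_vertex.
case/sadj_inr=> u [v [j [huv hj hz ->]]]; rewrite hz.
refine (nb_forced_walk (subdiv_walk_forced huv) (qs := fun _ i => inl (c0 i))
  (fun _ _ => cop_move_stay _ _) _ (j := j.+1) _); last lia.
rewrite subdiv_walk_last; last by right.
apply: at_vertex; apply: connect_trans (connect1 huv).
apply: (connect_trans hx); rewrite (sym_connect_sym e_sym).
apply: (connect_subdiv_base_connect (z := inl u)).
by rewrite hz; apply: connect_subdiv_walk; lia.
Qed.

Lemma subdiv_cops_win_on_comp k a :
  cops_win_on_comp e k (subdiv_base a) -> cops_win_on_comp A k.+1 a.
Proof.
case=> c0 [hc0 hwin].
pose C := connect A a.
have C_closed u v : C u -> A u v -> C v.
  by move=> hu huv; apply: connect_trans hu (connect1 huv).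
have C_sym u : C u -> connect A u a by rewrite (sym_connect_sym sadj_sym).
have C_cops i : C (inl (c0 i)).
  apply: connect_trans (connect_subdiv_inl (hc0 i)).
  by rewrite (sym_connect_sym sadj_sym) connect_subdiv_base.
have home z p : C z -> A p z -> nb_cops_win A (fun i => inl (c0 i)) z p.
  move=> hz hpz; apply: (subdiv_home_win hwin _ hpz).
  exact: (connect_subdiv_base_connect (hz : connect A a z)).
have anywhere (q : 'I_k -> V) :
    (forall i, C (q i)) -> forall z p, C z -> A p z -> nb_cops_win A q z p.
  move=> hq; apply: (nb_cops_win_connect C_closed home) => i.
  exact: connect_trans (C_sym _ (hq i)) (C_cops i).
exists (add_cop (fun i => inl (c0 i)) a); split.
  by apply: forall_add_cop => //; apply: connect0.
exact (follower_wins C_closed anywhere C_cops (connect0 A a : C a)).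
Qed.
End Subdivision.

Lemma bool_ofP (P : Prop) : bool_of P <-> P.
Proof. by rewrite /bool_of; case: excluded_middle_informative. Qed.

(* Placing one cop on every vertex shows that the minimum is taken over a
   nonempty set. *)
Lemma comp_cop_number_spec (V : finType) (adj : rel V) x0 :
  0 < comp_cop_number adj x0 /\ cops_win_on_comp adj (comp_cop_number adj x0) x0.
Proof.
rewrite /comp_cop_number; case: excluded_middle_informative => [h|[]].
  by case: ex_minnP => m /bool_ofP.
exists #|V|; apply/bool_ofP; split; first by apply/card_gt0P; exists x0.
exists (fun i => if connect adj x0 (enum_val i) then enum_val i else x0); split.
  by move=> i; case: ifP => // _; apply: connect0.
by move=> x hx; apply: cw_caught; exists (enum_rank x); rewrite enum_rankK hx.
Qed.

Lemma comp_cop_number_le (V : finType) (adj : rel V) x0 k :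
  0 < k -> cops_win_on_comp adj k x0 -> comp_cop_number adj x0 <= k.
Proof.
move=> hk hw; rewrite /comp_cop_number; case: excluded_middle_informative => [h|//].
by case: ex_minnP => m _; apply; apply/bool_ofP.
Qed.

Theorem proposition13 (T : finType) (e : rel T) (r : nat) :
  symmetric e -> irreflexive e -> 0 < r ->
  cop_number (sadj e r) <= (cop_number e).+1.
Proof.
move=> e_sym e_irr; case: r => [//|r] _.
apply/bigmax_leqP => a _.
have [_ hwin] := comp_cop_number_spec e (subdiv_base a).
have hwin' := subdiv_cops_win_on_comp e_sym e_irr hwin.
by apply: leq_trans (comp_cop_number_le (ltn0Sn _) hwin') _; rewrite ltnS leq_bigmax.
Qed.
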